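(* Let $\mathcal F=\{F_x : x\in V(G)\}$ be a representation of a connected triangle-free restricted frame graph $G$ with no full star-cutset. Then the big vertices of $\mathcal F$ form a clique of $G$; in particular, there are at most two big vertices.
   Context: $N[v]=\{v\}\cup N(v)$. A full star-cutset of a connected graph $G$ is a set $N[u]$ whose removal disconnects $G$. A frame is the boundary of an axis-parallel box in $\mathbb R^2$. A representation of $G$ as a restricted frame graph is a family of frames $\{F_x\}$ with $xy\in E(G)$ iff $F_x\cap F_y\neq\emptyset$, satisfying: (1) corners of a frame do not coincide with any point of another frame; (2) the left side of any frame meets no other frame; (3) if the right side of a frame meets a second frame, it meets both the top and the bottom side of that frame; (4) if two frames intersect, no frame is entirely contained in the intersection of the regions bounded by them. A frame $F_1$ contains $F_2$ if they are disjoint and $F_2$ lies in the region bounded by $F_1$. For an induced cycle $C$ of $G$, a vertex $v\in V(C)$ is a big vertex of $C$ (with respect to $\mathcal F$) if $F_v$ contains the frame of every vertex of $V(C)\setminus N[v]$; the big vertices of $\mathcal F$ are the vertices that are big vertices of some induced cycle of $G$. *)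

From HB Require Import structures.
From mathcomp Require Import all_boot all_order all_algebra.
From mathcomp Require Import reals.
Set Implicit Arguments. Unset Strict Implicit. Unset Printing Implicit Defensive.
Import Order.TTheory GRing.Theory Num.Theory.
Local Open Scope ring_scope.

(* A frame is the boundary of the axis-parallel box [fl,fr] x [fb,ft];
   nondegeneracy (fl < fr, fb < ft) is required in [frame_ok]. *)
Record frame (R : realType) := Frame { fl : R; fr : R; fb : R; ft : R }.

Section Frames.
Variable R : realType.
Implicit Types (f : frame R) (p : R * R).

Definition frame_ok f : bool := (fl f < fr f) && (fb f < ft f).

Definition left_side f p : bool := (p.1 == fl f) && (fb f <= p.2 <= ft f).
Definition right_side f p : bool := (p.1 == fr f) && (fb f <= p.2 <= ft f).
Definition bottom_side f p : bool := (p.2 == fb f) && (fl f <= p.1 <= fr f).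
Definition top_side f p : bool := (p.2 == ft f) && (fl f <= p.1 <= fr f).

Definition on_frame f p : bool :=
  [|| left_side f p, right_side f p, bottom_side f p | top_side f p].

Definition in_region f p : bool := (fl f <= p.1 <= fr f) && (fb f <= p.2 <= ft f).

Definition is_corner f p : bool :=
  ((p.1 == fl f) || (p.1 == fr f)) && ((p.2 == fb f) || (p.2 == ft f)).

Definition meets (A B : R * R -> bool) : Prop := exists p, A p && B p.

Definition frame_contains (f1 f2 : frame R) : Prop :=
  ~ meets (on_frame f1) (on_frame f2) /\
  (forall p, on_frame f2 p -> in_region f1 p).
End Frames.

Definition closed_nbhd (T : finType) (e : rel T) (u : T) : pred T :=
  [pred v | (v == u) || e u v].

Definition connected_graph (T : finType) (e : rel T) : Prop :=
  forall x y : T, connect e x y.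

Definition triangle_free (T : finType) (e : rel T) : Prop :=
  forall x y z : T, e x y -> e y z -> e x z -> False.

Definition remove_nbhd_rel (T : finType) (e : rel T) (u : T) : rel T :=
  [rel a b | [&& e a b, a \notin closed_nbhd e u & b \notin closed_nbhd e u]].

Definition full_star_cutset (T : finType) (e : rel T) (u : T) : Prop :=
  exists x y : T, [/\ x \notin closed_nbhd e u, y \notin closed_nbhd e u &
                      ~~ connect (remove_nbhd_rel e u) x y].

(* induced cycle given by a cyclic sequence s of distinct vertices (length >= 3):
   two vertices of s are adjacent iff they are cyclically consecutive in s *)
Definition induced_cycle (T : finType) (e : rel T) (s : seq T) : Prop :=
  [/\ uniq s, (3 <= size s)%N &
      {in s &, forall x y, e x y = (y == next s x) || (x == next s y)}].

Definition restricted_rep (R : realType) (T : finType) (e : rel T)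
    (F : T -> frame R) : Prop :=
  (forall x, frame_ok (F x)) /\
  (forall x y, e x y <-> (x != y /\ meets (on_frame (F x)) (on_frame (F y)))) /\
  [/\
      (forall x y p, x != y -> is_corner (F x) p -> ~~ on_frame (F y) p),
      forall x y, x != y -> ~ meets (left_side (F x)) (on_frame (F y)),
      (forall x y, x != y -> meets (right_side (F x)) (on_frame (F y)) ->
          meets (right_side (F x)) (top_side (F y)) /\
          meets (right_side (F x)) (bottom_side (F y)))
    &
      forall x y z, x != y -> meets (on_frame (F x)) (on_frame (F y)) ->
          ~ (forall p, on_frame (F z) p -> in_region (F x) p && in_region (F y) p)].

Definition big_vertex_of_cycle (R : realType) (T : finType) (e : rel T)
    (F : T -> frame R) (s : seq T) (v : T) : Prop :=
  v \in s /\ forall w, w \in s -> w \notin closed_nbhd e v -> frame_contains (F v) (F w).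

Definition big_vertex (R : realType) (T : finType) (e : rel T)
    (F : T -> frame R) (v : T) : Prop :=
  exists s, induced_cycle e s /\ big_vertex_of_cycle e F s v.

From HB Require Import structures.
From mathcomp Require Import all_boot all_order all_algebra.
From mathcomp Require Import reals.
From mathcomp Require Import lra.
Set Implicit Arguments. Unset Strict Implicit. Unset Printing Implicit Defensive.
Import Order.TTheory GRing.Theory Num.Theory.
Local Open Scope ring_scope.

(* Two frames with disjoint boundaries are either nested or far apart: if the
   boundary of b passes through the interior of u's box, then b's box lies inside
   u's box.  Let u be a big vertex of an induced cycle C; by triangle-freeness C
   has a vertex w outside N[u], whose box lies inside u's box.  Since N[u] is not
   a star-cutset, every x outside N[u] is joined to w by a path avoiding N[u], and
   along that path the frames stay disjoint from F_u, so by the nesting property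
   all their boxes lie inside u's box.  Two non-adjacent big vertices u, v would
   then have mutually nested, hence equal, boxes, so their frames would meet.
   Hence big vertices are pairwise adjacent, and triangle-freeness bounds their
   number by two. *)

Section FrameGeometry.
Variable R : realType.
Implicit Types (f g b u : frame R) (x y : R).

Lemma on_left_side f x y : x = fl f -> fb f <= y <= ft f -> on_frame f (x, y).
Proof. by move=> -> hy; rewrite /on_frame /left_side /= eqxx hy. Qed.
Lemma on_right_side f x y : x = fr f -> fb f <= y <= ft f -> on_frame f (x, y).
Proof. by move=> -> hy; rewrite /on_frame /right_side /= eqxx hy !orbT. Qed.
Lemma on_bottom_side f x y : y = fb f -> fl f <= x <= fr f -> on_frame f (x, y).
Proof. by move=> -> hx; rewrite /on_frame /bottom_side /= eqxx hx !orbT. Qed.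
Lemma on_top_side f x y : y = ft f -> fl f <= x <= fr f -> on_frame f (x, y).
Proof. by move=> -> hx; rewrite /on_frame /top_side /= eqxx hx !orbT. Qed.

Lemma on_frameP f x y : on_frame f (x, y) ->
  [\/ x = fl f /\ fb f <= y <= ft f, x = fr f /\ fb f <= y <= ft f,
      y = fb f /\ fl f <= x <= fr f | y = ft f /\ fl f <= x <= fr f].
Proof.
rewrite /on_frame /left_side /right_side /bottom_side /top_side /=.
by case/or4P => /andP[/eqP-> ?]; [apply: Or41 | apply: Or42 | apply: Or43 | apply: Or44].
Qed.

Lemma on_frame_in_region f p : frame_ok f -> on_frame f p -> in_region f p.
Proof.
case: p => x y /andP[lr bt] /on_frameP.
by rewrite /in_region /=; case=> -[-> /andP[? ?]]; rewrite ?lexx; lra.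
Qed.

Definition interior f (p : R * R) : bool :=
  (fl f < p.1 < fr f) && (fb f < p.2 < ft f).

Lemma interior_of_region f p : in_region f p -> ~~ on_frame f p -> interior f p.
Proof.
case: p => x y /andP[/andP[hl hr] /andP[hb ht]] /negP off; rewrite /interior /=.
have strict (a c : R) : a <= c -> (a = c -> on_frame f (x, y)) -> a < c.
  by move=> ac E; rewrite lt_neqAle ac andbT; apply/eqP => /E.
rewrite (strict _ _ hl) ?(strict _ _ hr) ?(strict _ _ hb) ?(strict _ _ ht) // => E.
- by apply: on_top_side; rewrite ?E ?hl ?hr.
- by apply: on_bottom_side; rewrite ?E ?hl ?hr.
- by apply: on_right_side; rewrite ?E ?hb ?ht.
- by apply: on_left_side; rewrite ?E ?hb ?ht.
Qed.

Lemma meets_at (A B : R * R -> bool) p : A p -> B p -> meets A B.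
Proof. by move=> a b; exists p; rewrite a b. Qed.

(* The vertical line through the right side of u meets the boundary of b at
   heights fb b and ft b, so both lie outside [fb u, ft u]; then b's box straddles
   u's box vertically and the side of b through p must cross the top of u. *)
Lemma disjoint_right_bound b u p :
  frame_ok b -> on_frame b p -> interior u p ->
  ~ meets (on_frame b) (on_frame u) -> fr b <= fr u.
Proof.
case: p => x y okb pb /andP[/andP[/= lx xr] /andP[/= yb yt]] disj.
have /andP[/andP[/= lbx xrb] /andP[/= bby ytb]] := on_frame_in_region okb pb.
rewrite leNgt; apply/negP => ur.
have bb : fb b < fb u.
  rewrite ltNge; apply/negP => ub; apply: disj; apply: (@meets_at _ _ (fr u, fb b)).
    by apply: on_bottom_side; lra.
  by apply: on_right_side; lra.
have tb : ft u < ft b.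
  rewrite ltNge; apply/negP => bu; apply: disj; apply: (@meets_at _ _ (fr u, ft b)).
    by apply: on_top_side; lra.
  by apply: on_right_side; lra.
case: (on_frameP pb) => -[E _]; try lra.
apply: disj; apply: (@meets_at _ _ (fl b, ft u)).
  by apply: on_left_side; lra.
by apply: on_top_side; lra.
Qed.

(* The other three bounds follow by reflecting in the vertical axis and in the
   diagonal. *)
Definition mirror f := Frame (- fr f) (- fl f) (fb f) (ft f).
Definition transpose f := Frame (fb f) (ft f) (fl f) (fr f).

Lemma frame_ok_mirror f : frame_ok (mirror f) = frame_ok f.
Proof. by rewrite /frame_ok /= ltrN2. Qed.

Lemma frame_ok_transpose f : frame_ok (transpose f) = frame_ok f.
Proof. by rewrite /frame_ok /= andbC. Qed.

Lemma on_frame_mirror f x y : on_frame (mirror f) (- x, y) = on_frame f (x, y).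
Proof.
rewrite /on_frame /left_side /right_side /bottom_side /top_side /= !eqr_opp !lerN2.
by rewrite !(andbC (x <= fr f)) orbA [X in X || _]orbC -orbA.
Qed.

Lemma on_frame_transpose f x y : on_frame (transpose f) (y, x) = on_frame f (x, y).
Proof.
rewrite /on_frame /left_side /right_side /bottom_side /top_side /=.
by rewrite [LHS]orbA [LHS]orbC -orbA.
Qed.

Lemma interior_mirror f x y : interior (mirror f) (- x, y) = interior f (x, y).
Proof. by rewrite /interior /= !ltrN2 [_ && (fl f < x)]andbC. Qed.

Lemma interior_transpose f x y : interior (transpose f) (y, x) = interior f (x, y).
Proof. by rewrite /interior /= andbC. Qed.

Lemma meets_mirror f g :
  meets (on_frame (mirror f)) (on_frame (mirror g)) -> meets (on_frame f) (on_frame g).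
Proof.
case=> -[x y]; rewrite -[x]opprK !on_frame_mirror => /andP[].
exact: meets_at.
Qed.

Lemma meets_transpose f g :
  meets (on_frame (transpose f)) (on_frame (transpose g)) -> meets (on_frame f) (on_frame g).
Proof. by case=> -[x y]; rewrite !on_frame_transpose => /andP[]; apply: meets_at. Qed.

Lemma disjoint_left_bound b u p :
  frame_ok b -> on_frame b p -> interior u p ->
  ~ meets (on_frame b) (on_frame u) -> fl u <= fl b.
Proof.
case: p => x y okb pb pu disj; rewrite -lerN2.
apply: (@disjoint_right_bound (mirror b) (mirror u) (- x, y)).
- by rewrite frame_ok_mirror.
- by rewrite on_frame_mirror.
- by rewrite interior_mirror.
- by move/meets_mirror.
Qed.

Definition sub_box b u : bool :=
  [&& fl u <= fl b, fr b <= fr u, fb u <= fb b & ft b <= ft u].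

Lemma disjoint_sub_box b u p :
  frame_ok b -> on_frame b p -> interior u p ->
  ~ meets (on_frame b) (on_frame u) -> sub_box b u.
Proof.
case: p => x y okb pb pu disj.
have okb' : frame_ok (transpose b) by rewrite frame_ok_transpose.
have pb' : on_frame (transpose b) (y, x) by rewrite on_frame_transpose.
have pu' : interior (transpose u) (y, x) by rewrite interior_transpose.
have disj' : ~ meets (on_frame (transpose b)) (on_frame (transpose u)).
  by move/meets_transpose.
apply/and4P; split.
- exact: disjoint_left_bound okb pb pu disj.
- exact: disjoint_right_bound okb pb pu disj.
- exact: disjoint_left_bound okb' pb' pu' disj'.
- exact: disjoint_right_bound okb' pb' pu' disj'.
Qed.

Lemma sub_box_region b u p : frame_ok b -> sub_box b u -> on_frame b p -> in_region u p.
Proof.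
move=> okb /and4P[l r bo t] /(on_frame_in_region okb).
by case: p => x y /andP[/andP[/= ? ?] /andP[/= ? ?]]; rewrite /in_region /=; lra.
Qed.

Lemma sub_box_of_region b u :
  frame_ok b -> (forall p, on_frame b p -> in_region u p) -> sub_box b u.
Proof.
move=> /andP[lr bt] inside.
have /andP[/andP[/= l _] /andP[/= bo _]] : in_region u (fl b, fb b).
  by apply: inside; apply: on_left_side => //; rewrite lexx ltW.
have /andP[/andP[/= _ r] /andP[/= _ t]] : in_region u (fr b, ft b).
  by apply: inside; apply: on_right_side => //; rewrite lexx ltW.
exact/and4P.
Qed.

Lemma sub_box_propagate a b u :
  frame_ok a -> frame_ok b -> sub_box a u -> ~ meets (on_frame a) (on_frame u) ->
  meets (on_frame a) (on_frame b) -> ~ meets (on_frame b) (on_frame u) -> sub_box b u.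
Proof.
move=> oka okb au disj_au [p /andP[pa pb]] disj_bu.
apply: (disjoint_sub_box okb pb _ disj_bu); apply: interior_of_region.
  exact: sub_box_region oka au pa.
by apply/negP => pu; apply: disj_au; apply: meets_at pa pu.
Qed.

Lemma sub_box_antisym_meets b u :
  frame_ok u -> sub_box b u -> sub_box u b -> meets (on_frame b) (on_frame u).
Proof.
move=> /andP[lr bt] /and4P[l r bo t] /and4P[l' r' bo' t'].
apply: (@meets_at _ _ (fl u, fb u)).
  by apply: on_left_side; lra.
by apply: on_left_side; lra.
Qed.

End FrameGeometry.

Section TriangleFree.
Variables (T : finType) (e : rel T).
Hypothesis tf : triangle_free e.

Lemma triangle_free_clique_card (S : {set T}) :
  {in S &, forall u v, u != v -> e u v} -> (#|S| <= 2)%N.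
Proof.
move=> clique; rewrite leqNgt; apply/card_gt2P => -[x [y [z [[xS yS zS] [xy yz zx]]]]].
by apply: (tf (x := x) (y := y) (z := z)); apply: clique; rewrite // eq_sym.
Qed.

Lemma triangle_free_cycle_size s : induced_cycle e s -> (3 < size s)%N.
Proof.
case=> us s3 adj; rewrite ltn_neqAle s3 andbT.
apply/negP; case: s us adj {s3} => [|a [|b [|c [|//]]]] //= us adj _.
move: us; rewrite !inE !negb_or => /and3P[/andP[ab ac] bc _].
apply: (tf (x := a) (y := b) (z := c)).
- by rewrite adj ?inE ?eqxx ?orbT //= eqxx.
- by rewrite adj ?inE ?eqxx ?orbT //= (eq_sym b a) (negbTE ab) eqxx.
- rewrite adj ?inE ?eqxx ?orbT //= (eq_sym c a) (negbTE ac) (eq_sym c b) (negbTE bc).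
  by rewrite eqxx orbT.
Qed.

Lemma cycle_closed_nbhd s u w : induced_cycle e s -> u \in s -> w \in s ->
  w \in closed_nbhd e u -> w \in [:: u; next s u; prev s u].
Proof.
case=> us _ adj uin ws; rewrite !inE => /orP[-> //|].
rewrite adj // => /orP[-> | /eqP uE]; first by rewrite orbT.
by rewrite uE (prev_next us) eqxx !orbT.
Qed.

Lemma cycle_non_neighbour s u : induced_cycle e s -> u \in s ->
  exists2 w, w \in s & w \notin closed_nbhd e u.
Proof.
move=> cs uin.
have [/hasP[w ws wn] | /hasPn near] := boolP (has [predC closed_nbhd e u] s).
  by exists w.
have sub : {subset s <= [:: u; next s u; prev s u]}.
  by move=> w ws; move/negPn: (near w ws); apply: cycle_closed_nbhd.
have [us _ _] := cs.
by have := uniq_leq_size us sub; rewrite leqNgt (triangle_free_cycle_size cs).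
Qed.

End TriangleFree.

Section FrameRepresentation.
Variables (R : realType) (T : finType) (e : rel T) (F : T -> frame R).
Hypothesis rep : restricted_rep e F.

Lemma rep_frame_ok x : frame_ok (F x).
Proof. by case: rep. Qed.

Lemma rep_edgeP x y : e x y <-> x != y /\ meets (on_frame (F x)) (on_frame (F y)).
Proof. by case: rep => _ []. Qed.

Lemma rep_sym x y : e x y -> e y x.
Proof.
case/rep_edgeP => xy [p /andP[px py]]; apply/rep_edgeP.
by split; [rewrite eq_sym | apply: meets_at py px].
Qed.

Lemma far_frames_disjoint u x :
  x \notin closed_nbhd e u -> ~ meets (on_frame (F x)) (on_frame (F u)).
Proof.
rewrite inE negb_or => /andP[xu nux] m.
by move/negP: nux; apply; apply/rep_sym/rep_edgeP.
Qed.

Lemma sub_box_connect u w x :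
  sub_box (F w) (F u) -> w \notin closed_nbhd e u ->
  connect (remove_nbhd_rel e u) w x -> sub_box (F x) (F u).
Proof.
move=> wu wn /connectP[p pth ->] {x}.
elim: p w wu wn pth => [|y p IH] w wu wn //= /andP[/and3P[ewy _ yn] pth].
apply: IH pth => //; apply: (sub_box_propagate (a := F w)) => //.
- exact: rep_frame_ok.
- exact: rep_frame_ok.
- exact: far_frames_disjoint.
- by case/rep_edgeP: ewy.
- exact: far_frames_disjoint.
Qed.

Hypothesis tf : triangle_free e.
Hypothesis no_star_cutset : forall u, ~ full_star_cutset e u.

Lemma big_vertex_sub_box u x :
  big_vertex e F u -> x \notin closed_nbhd e u -> sub_box (F x) (F u).
Proof.
move=> [s [cs [uin big]]] xn.
have [w ws wn] := cycle_non_neighbour tf cs uin.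
have [_ w_in_u] := big w ws wn.
apply: (sub_box_connect (sub_box_of_region (rep_frame_ok w) w_in_u) wn).
by apply/negPn/negP => disconnected; apply: (no_star_cutset (u := u)); exists w, x.
Qed.

Lemma big_vertices_adjacent u v :
  big_vertex e F u -> big_vertex e F v -> u != v -> e u v.
Proof.
move=> bu bv uv; apply/negPn/negP => nuv.
have nvu : ~~ e v u by apply: contra nuv; apply: rep_sym.
have vn : v \notin closed_nbhd e u by rewrite inE negb_or eq_sym uv.
have un : u \notin closed_nbhd e v by rewrite inE negb_or uv.
have vu_meet := sub_box_antisym_meets (rep_frame_ok u)
  (big_vertex_sub_box bu vn) (big_vertex_sub_box bv un).
by move/negP: nvu; apply; apply/rep_edgeP; split; rewrite // eq_sym.
Qed.

End FrameRepresentation.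

Theorem lemma3p9 (R : realType) (T : finType) (e : rel T) (F : T -> frame R) :
  restricted_rep e F ->
  connected_graph e ->
  triangle_free e ->
  (forall u : T, ~ full_star_cutset e u) ->
  (forall u v : T, big_vertex e F u -> big_vertex e F v -> u != v -> e u v) /\
  (forall S : {set T}, (forall v, v \in S -> big_vertex e F v) -> (#|S| <= 2)%N).
Proof.
move=> rep _ tf no_cutset.
have adjacent := big_vertices_adjacent rep tf no_cutset.
split=> // S big; apply: (triangle_free_clique_card tf) => u v uS vS.
exact: adjacent (big u uS) (big v vS).
Qed.
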